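(* Let $(X_n)_{n\in\mathbb{N}}$ be i.i.d. real random variables with distribution function $F$ and survival function $\bar F(x)=\mathbb{P}(X_1>x)$, with $\bar F(x)=x^{-\alpha}L(x)$ for all $x>x_0$, where $x_0>0$, $\alpha>0$ and $L$ is slowly varying. Let $X_{(n)}=\max_{1\le i\le n}X_i$, $a_n=F^{\leftarrow}(1-1/n)$ and, for $n\ge2$, $Z_n=(X_{(n)}/a_n)^{\alpha/\log n}$ (on $\{X_{(n)}>0\}$). Then for every $x\ge 1$, \[ \limsup_{n\to\infty}\frac{1}{\log n}\log\mathbb{P}(Z_n>x)\le -\log x. \]
   Context: A function $L:(0,\infty)\to(0,\infty)$ is slowly varying if $\lim_{x\to\infty}L(tx)/L(x)=1$ for all $t>0$. $F^{\leftarrow}(u)=\inf\{x\in\mathbb{R}: F(x)\ge u\}$. Note $\{Z_n>x\}=\{X_{(n)}>a_n x^{\log n/\alpha}\}$ for $x\ge1$ once $a_n>0$. *)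

From HB Require Import structures.
From mathcomp Require Import all_boot all_order all_algebra.
From mathcomp Require Import all_classical all_reals all_analysis.
Set Implicit Arguments. Unset Strict Implicit. Unset Printing Implicit Defensive.
Import Order.TTheory GRing.Theory Num.Theory.
Import numFieldNormedType.Exports.
Local Open Scope classical_set_scope.
Local Open Scope ring_scope.

Section Defs.
Context {R : realType} {d : measure_display} {T : measurableType d}.
Variable P : probability T R.

Definition mutually_independent (X : nat -> {RV P >-> R}) : Prop :=
  forall (s : seq nat) (B : nat -> set R), uniq s ->
    (forall i, measurable (B i)) ->
    fine (P (\big[setI/setT]_(i <- s) (X i @^-1` B i))) =
    \prod_(i <- s) fine (P (X i @^-1` B i)).

Definition identically_distributed (X : nat -> {RV P >-> R}) : Prop :=
  forall n (B : set R), measurable B -> P (X n @^-1` B) = P (X 0%N @^-1` B).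

Definition distF (X : {RV P >-> R}) (x : R) : R := fine (P [set w | X w <= x]).
Definition survF (X : {RV P >-> R}) (x : R) : R := fine (P [set w | x < X w]).

End Defs.

Definition geninv {R : realType} (F : R -> R) (u : R) : R := inf [set x | u <= F x].

Definition slowly_varying {R : realType} (L : R -> R) : Prop :=
  (forall x, 0 < x -> 0 < L x) /\
  forall t, 0 < t -> (fun x => L (t * x) / L x) @ +oo --> (1 : R).

Definition maxX {R : realType} {T : Type} (X : nat -> T -> R) (n : nat) (w : T) : R :=
  \big[Num.max/X 1%N w]_(1 <= i < n.+1) X i w.

From HB Require Import structures.
From mathcomp Require Import all_boot all_order all_algebra.
From mathcomp Require Import all_classical all_reals all_analysis.
From mathcomp Require Import ring lra.
Import Order.TTheory GRing.Theory Num.Theory.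
Import numFieldNormedType.Exports.
Local Open Scope classical_set_scope.
Local Open Scope ring_scope.

(* Since F-bar is regularly varying with index -alpha, for every beta < alpha it
   eventually satisfies F-bar(2t) <= 2^-beta F-bar(t); iterating gives the Potter
   bound F-bar(y) <= 2^beta (y/u)^-beta F-bar(u) for large u <= y.  Now
   {Z_n > x} = {X_(n) > a_n x^(log n / alpha)}, the union bound gives
   P(X_(n) > y) <= n F-bar(y), and F-bar(2 a_n) <= 1/n by definition of the
   quantile a_n.  Taking u = 2 a_n and y = a_n x^(log n / alpha) yields
   P(Z_n > x) <= 4^beta x^(-beta log n / alpha), i.e. a rate -(beta/alpha) log x
   up to o(1); letting beta tend to alpha gives the claim. *)

Section PotterBound.
Context {R : realType} {S : R -> R} {A b : R}.
Hypothesis A_gt0 : 0 < A.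
Hypothesis b_ge0 : 0 <= b.
Hypothesis S_ge0 : forall t, 0 <= S t.
Hypothesis S_nonincr : {homo S : s t /~ s <= t}.
Hypothesis S_doubling : forall t, A <= t -> S (2 * t) <= expR (- (b * ln 2)) * S t.

Lemma iter_doubling_le k u : A <= u -> S (2 ^+ k * u) <= expR (- (b * ln 2)) ^+ k * S u.
Proof.
elim: k u => [|k IHk] u Au; first by rewrite !expr0 !mul1r.
have Ak : A <= 2 ^+ k * u.
  have : 1 <= (2 : R) ^+ k by rewrite exprn_ege1 // ler1n.
  have : 0 < u by apply: lt_le_trans Au.
  nra.
rewrite exprS -mulrA exprS -mulrA.
apply: (le_trans (S_doubling _ Ak)).
by rewrite ler_wpM2l ?expR_ge0 // IHk.
Qed.

Lemma potter_upper_bound u y : A <= u -> u <= y ->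
  S y <= expR (b * (ln 2 - ln (y / u))) * S u.
Proof.
move=> Au uy; have u_gt0 : 0 < u by apply: lt_le_trans Au.
have yu_gt0 : 0 < y / u by rewrite divr_gt0 // (lt_le_trans u_gt0 uy).
have ln2_gt0 : 0 < ln (2 : R) by rewrite ln_gt0 // ltr1n.
have yu_ge1 : 1 <= y / u by rewrite ler_pdivlMr // mul1r.
have /andP[m_le m_gt] := truncn_itv (divr_ge0 (ln_ge0 yu_ge1) (ltW ln2_gt0)).
set m := Num.truncn _ in m_le m_gt.
rewrite ler_pdivlMr // in m_le; rewrite ltr_pdivrMr // in m_gt.
have lo : 2 ^+ m * u <= y.
  by rewrite -ler_pdivlMr // -ler_ln ?posrE ?exprn_gt0 // lnXn // -[_ *+ m]mulr_natl.
apply: (le_trans (S_nonincr _ _ lo)); apply: (le_trans (iter_doubling_le m _ Au)).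
apply: ler_wpM2r => //; rewrite -expRM_natl ler_expR.
have : 0 <= b * (m.+1%:R * ln 2 - ln (y / u)) by rewrite mulr_ge0 // subr_ge0 ltW.
rewrite [m.+1%:R]mulrSr; nra.
Qed.

End PotterBound.

Section RegularVariation.
Context {R : realType} {S L : R -> R} {x0 alpha beta : R}.
Hypotheses (beta_lt : beta < alpha) (L_sv : slowly_varying L).
Hypothesis S_reg : forall x, x0 < x -> S x = powR x (- alpha) * L x.

Lemma regular_variation_doubling :
  exists2 A, 0 < A /\ x0 < A & forall t, A <= t -> S (2 * t) <= expR (- (beta * ln 2)) * S t.
Proof.
have [L_gt0 L_ratio_cvg] := L_sv.
have ln2_gt0 : 0 < ln (2 : R) by rewrite ln_gt0 // ltr1n.
have gap_gt1 : 1 < expR ((alpha - beta) * ln 2) by rewrite expR_gt1 mulr_gt0 // subr_gt0.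
have [M [_ L_ratio]] := cvgr_lt 1 (L_ratio_cvg 2 (ltr0Sn _ 1)) _ gap_gt1.
have M_le : M <= Num.max M (Num.max x0 0) by rewrite le_max lexx.
have x0_le : x0 <= Num.max M (Num.max x0 0) by rewrite !le_max lexx orbT.
have zero_le : 0 <= Num.max M (Num.max x0 0) by rewrite !le_max lexx !orbT.
exists (Num.max M (Num.max x0 0) + 1) => [|t t_ge]; first by split; lra.
have t_gt0 : 0 < t by lra.
have x0_lt : x0 < 2 * t by lra.
have L2t_lt : L (2 * t) < expR ((alpha - beta) * ln 2) * L t.
  by rewrite -ltr_pdivrMr ?L_gt0 //; apply: L_ratio; lra.
rewrite S_reg // S_reg; last by lra.
rewrite powRM ?ler0n ?(ltW t_gt0) //.
have -> : expR (- (beta * ln 2)) = powR 2 (- alpha) * expR ((alpha - beta) * ln 2).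
  by rewrite /powR pnatr_eq0 /= -expRD; congr expR; ring.
rewrite -!mulrA ler_wpM2l ?powR_ge0 // mulrCA ler_wpM2l ?powR_ge0 // ltW //.
Qed.

End RegularVariation.

Lemma lt_bigmax_seq (R : realDomainType) (I : Type) (s : seq I) (idx y : R) (F : I -> R) :
  (y < \big[Num.max/idx]_(i <- s) F i) = (y < idx) || has (fun i => y < F i) s.
Proof.
elim: s => [|i s IHs]; first by rewrite big_nil /= orbF.
by rewrite big_cons lt_max IHs /= orbCA.
Qed.

Lemma lt_maxX (R : realType) (T : Type) (f : nat -> T -> R) n w y : (0 < n)%N ->
  (y < maxX f n w) <-> exists2 k, (k < n)%N & y < f k.+1 w.
Proof.
move=> n_gt0; rewrite /maxX lt_bigmax_seq; split.
- case/orP => [y_lt|/hasP[i]]; first by exists 0%N.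
  rewrite mem_index_iota => /andP[i_ge1 i_le] y_lt.
  by exists i.-1; rewrite prednK.
- by move=> [k k_lt y_lt]; apply/orP; right; apply/hasP; exists k.+1; rewrite ?mem_index_iota.
Qed.

Lemma maxX_gt_bigsetU (R : realType) (T : Type) (f : nat -> T -> R) n y : (0 < n)%N ->
  [set w | y < maxX f n w] = \big[setU/set0]_(k < n) [set w | y < f k.+1 w].
Proof.
move=> n_gt0; rewrite -(bigcup_mkord n (fun k => [set w | y < f k.+1 w])).
by apply/seteqP; split => w /=; rewrite lt_maxX.
Qed.

Section Distribution.
Context {R : realType} {d : measure_display} {T : measurableType d}.
Variable P : probability T R.
Implicit Type Y : {RV P >-> R}.

Lemma measurable_RV_gt Y t : measurable [set w | t < Y w].
Proof.
have := measurable_funPTI Y (measurable_itv `]t, +oo[).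
by congr measurable; apply/seteqP; split => w /=; rewrite in_itv /= andbT.
Qed.

Lemma measurable_RV_le Y t : measurable [set w | Y w <= t].
Proof.
have := measurable_funPTI Y (measurable_itv `]-oo, t]).
by congr measurable; apply/seteqP; split => w /=; rewrite in_itv.
Qed.

Lemma survF_distF Y t : survF Y t = 1 - distF Y t.
Proof.
rewrite /survF; have -> : [set w | t < Y w] = ~` [set w | Y w <= t].
  by apply/seteqP; split => w /=; rewrite ltNge => /negP.
by rewrite probability_setC ?fineB ?fin_num_measure //; exact: measurable_RV_le.
Qed.

Lemma survF_ge0 Y t : 0 <= survF Y t.
Proof. by rewrite fine_ge0 ?measure_ge0. Qed.

Lemma survF_nonincr Y : {homo survF Y : s t /~ s <= t}.
Proof.
move=> s t st; have ms := measurable_RV_gt Y s; have mt := measurable_RV_gt Y t.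
apply: fine_le; rewrite ?fin_num_measure //.
by apply: le_measure; rewrite ?inE // => w /= /(le_lt_trans st).
Qed.

Lemma distF_nondecr Y : {homo distF Y : s t / s <= t}.
Proof.
move=> s t st; have ms := measurable_RV_le Y s; have mt := measurable_RV_le Y t.
apply: fine_le; rewrite ?fin_num_measure //.
by apply: le_measure; rewrite ?inE // => w /= /le_trans; apply.
Qed.

(* [inf set0 = 0], so a positive quantile comes from a nonempty set *)
Lemma survF_le_geninv Y u t : 0 < geninv (distF Y) u -> geninv (distF Y) u < t ->
  survF Y t <= 1 - u.
Proof.
rewrite /geninv => q_gt0 q_lt.
have [[z z_le]|nonempty] := pselect ([set x | u <= distF Y x] !=set0).
  have [z' u_le z'_lt] := inf_lt (ex_intro _ z z_le) q_lt.
  by rewrite survF_distF lerB // (le_trans u_le) // distF_nondecr // ltW.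
move: q_gt0; suff -> : [set x | u <= distF Y x] = set0 by rewrite inf0 ltxx.
by apply/seteqP; split => // z z_le; apply: nonempty; exists z.
Qed.

Lemma measurable_maxX_gt (X : nat -> {RV P >-> R}) n y : (0 < n)%N ->
  measurable [set w | y < maxX (fun i => X i : T -> R) n w].
Proof.
move=> n_gt0; rewrite maxX_gt_bigsetU //.
by apply: bigsetU_measurable => k _; exact: measurable_RV_gt.
Qed.

Lemma P_maxX_gt_le (X : nat -> {RV P >-> R}) n y : identically_distributed X -> (0 < n)%N ->
  (P [set w | (y < maxX (fun i => X i : T -> R) n w)%R] <= (n%:R * survF (X 1%N) y)%:E)%E.
Proof.
move=> X_id n_gt0.
have PXk k : P [set w | y < X k w] = (survF (X 1%N) y)%:E.
  have gt_preimage (Y : {RV P >-> R}) : [set w | y < Y w] = Y @^-1` `]y, +oo[.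
    by apply/seteqP; split => w /=; rewrite in_itv /= andbT.
  rewrite /survF fineK; last exact/fin_num_measure/measurable_RV_gt.
  by rewrite !gt_preimage X_id ?(X_id 1%N) //; exact: measurable_itv.
apply: (le_trans (content_subadditive P (F := fun k => [set w | y < X k.+1 w]) (n := n) _ _ _)).
- by move=> k _; exact: measurable_RV_gt.
- exact: measurable_maxX_gt.
- by rewrite maxX_gt_bigsetU.
- rewrite (eq_bigr (fun=> (survF (X 1%N) y)%:E)) => [|k _]; last exact: PXk.
  by rewrite sumEFin sumr_const card_ord mulr_natl.
Qed.

End Distribution.

Section NormalizedMaximum.
Context {R : realType} {alpha l x : R}.
Hypotheses (alpha_gt0 : 0 < alpha) (l_gt0 : 0 < l) (x_ge1 : 1 <= x).

Lemma lt_powR_div_iff (a M : R) :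
  (0 < M /\ x < powR (M / a) (alpha / l)) <-> (0 < a /\ a * expR (ln x / alpha * l) < M).
Proof.
have x_gt0 : 0 < x := lt_le_trans ltr01 x_ge1.
have e_gt0 : 0 < alpha / l by rewrite divr_gt0.
have lt_powR z : 0 < z -> (x < powR z (alpha / l)) = (expR (ln x / alpha * l) < z).
  move=> z_gt0; rewrite /powR gt_eqF // -{1}(lnK x_gt0) ltr_expR -{2}(lnK z_gt0) ltr_expR.
  rewrite -ltr_pdivrMl //; congr (_ < _); field; rewrite !gt_eqF //.
split=> [[M_gt0 x_lt]|[a_gt0 M_gt]].
- have [a_gt0|a_le0] := ltP 0 a.
    by split=> //; rewrite mulrC -ltr_pdivlMr // -lt_powR // divr_gt0.
  (* for [a <= 0] the base [M / a] is nonpositive, where [powR] takes the junk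
     value 0 or 1, and neither exceeds [x] *)
  exfalso; move: x_lt; rewrite /powR.
  case: ifPn => [_|_]; first by rewrite (negbTE (lt0r_neq0 e_gt0)) /= ltNge (ltW x_gt0).
  by rewrite ln0 ?mulr0 ?expR0 ?pmulr_rle0 ?invr_le0 // ltNge x_ge1.
- have M_gt0 : 0 < M by apply: lt_trans M_gt; rewrite mulr_gt0 ?expR_gt0.
  by split=> //; rewrite lt_powR ?divr_gt0 // ltr_pdivlMr // mulrC.
Qed.

Lemma powR_div_event_eq (T : Type) (M : T -> R) (a : R) :
  [set w | 0 < M w /\ x < powR (M w / a) (alpha / l)] =
  if 0 < a then [set w | a * expR (ln x / alpha * l) < M w] else set0.
Proof.
apply/seteqP; split => w /=; first by move/lt_powR_div_iff => [->].
by case: ifPn => // a_gt0 M_gt; apply/lt_powR_div_iff.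
Qed.

End NormalizedMaximum.

Section TailBound.
Context {R : realType} {d : measure_display} {T : measurableType d}.
Context {P : probability T R} {X : nat -> {RV P >-> R}} {A beta : R}.
Hypotheses (X_id : identically_distributed X) (A_gt0 : 0 < A) (beta_ge0 : 0 <= beta).
Hypothesis S_doubling : forall t, A <= t ->
  survF (X 1%N) (2 * t) <= expR (- (beta * ln 2)) * survF (X 1%N) t.
Hypothesis SA_gt0 : 0 < survF (X 1%N) A.

Lemma P_maxX_gt_quantile_le (n : nat) (c : R) :
  (survF (X 1%N) A)^-1 < n%:R -> 0 < geninv (distF (X 1%N)) (1 - n%:R^-1) -> ln 2 <= c ->
  (P [set w | (geninv (distF (X 1%N)) (1 - n%:R^-1) * expR c < maxX (fun i => X i : T -> R) n w)%R]
     <= (expR (beta * (2 * ln 2 - c)))%:E)%E.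
Proof.
set S := survF (X 1%N); set q := geninv _ _ => n_gt q_gt0 c_ge.
have n_gt0 : 0 < n%:R :> R by apply: lt_trans n_gt; rewrite invr_gt0.
have S_gt_q t : q < t -> S t <= n%:R^-1.
  by move=> /(survF_le_geninv _ _ _ _ q_gt0); rewrite subKr.
(* Potter's bound is used between [u = 2 q], where the quantile already forces
   [S u <= 1 / n], and the threshold [y = q * expR c]. *)
have A_le : A <= 2 * q.
  rewrite leNgt; apply/negP => qA; have /S_gt_q SA_le : q < A by lra.
  by move: n_gt; rewrite ltNge -(invrK n%:R) lef_pV2 ?posrE ?invr_gt0 // SA_le.
have y_ge : 2 * q <= q * expR c.
  by rewrite mulrC ler_pM2l // -(lnK (_ : 0 < 2)) ?posrE // ler_expR.
have n_pos : (0 < n)%N by rewrite -(ltr0n R).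
have union_bound := P_maxX_gt_le P X n (q * expR c) X_id n_pos.
apply: le_trans union_bound _; rewrite lee_fin.
have ln_ratio : ln (q * expR c / (2 * q)) = c - ln 2.
  have -> : q * expR c / (2 * q) = expR c / 2 by field; rewrite gt_eqF.
  by rewrite ln_div ?posrE ?expR_gt0 // expRK.
have := potter_upper_bound A_gt0 beta_ge0 (survF_ge0 P (X 1%N))
  (survF_nonincr P (X 1%N)) S_doubling _ _ A_le y_ge.
rewrite ln_ratio -ler_pdivlMl // => /le_trans; apply.
have -> : 2 * ln 2 - c = ln 2 - (c - ln 2) :> R by ring.
rewrite [X in _ <= X]mulrC ler_wpM2l ?expR_ge0 // S_gt_q //; lra.
Qed.

End TailBound.

Lemma limn_esup_le_eventually (R : realType) (u : nat -> \bar R) (l : R) :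
  (forall e, 0 < e -> exists N, forall n, (N <= n)%N -> (u n <= (l + e)%:E)%E) ->
  (limn_esup u <= l%:E)%E.
Proof.
move=> u_le; apply/lee_addgt0Pr => e e_gt0; have [N u_leN] := u_le e e_gt0.
apply: (@le_trans _ _ (ereal_sup (u @` [set n | (N <= n)%N]))).
  by apply: ereal_inf_lbound; exists [set n | (N <= n)%N] => //; exists N.
by apply: ge_ereal_sup => _ [n n_ge <-]; rewrite -EFinD; exact: u_leN.
Qed.

Lemma lne_mul_le (R : realType) (p : \bar R) (v r : R) :
  (0 <= p)%E -> (p <= (expR v)%:E)%E -> 0 < r -> (lne p * r%:E <= (v * r)%:E)%E.
Proof.
case: p => [q| |] //=; rewrite !lee_fin => q_ge0 q_le r_gt0.
have [q_gt0|] := ltP 0 q.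
  by rewrite -EFinM lee_fin ler_pM2r // -ler_expR lnK.
by rewrite gt0_mulNye ?leNye.
Qed.

Lemma ln_nat_ge_eventually (R : realType) (K : R) :
  exists N, forall n, (N <= n)%N -> K <= ln (n%:R : R).
Proof.
exists (Num.truncn (expR K)).+1 => n n_ge.
have K_lt : expR K < n%:R by apply: lt_le_trans (truncnS_gt _) _; rewrite ler_nat.
have n_gt0 : 0 < n%:R :> R := lt_trans (expR_gt0 K) K_lt.
by rewrite -ler_expR lnK ?posrE // ltW.
Qed.

Lemma tail_exponent_le (R : realFieldType) (alpha e l m k : R) :
  0 < alpha -> 0 < e -> e <= l -> 4 * (alpha * (1 - e / (2 * l))) * k / e <= m ->
  alpha * (1 - e / (2 * l)) * (2 * k - l / alpha * m) <= (- l + e) * m.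
Proof.
move=> alpha_gt0 e_gt0 e_le; rewrite ler_pdivrMr // => m_ge.
have -> : alpha * (1 - e / (2 * l)) * (2 * k - l / alpha * m)
    = 2 * (alpha * (1 - e / (2 * l))) * k - l * m + e * m / 2.
  by field; rewrite !gt_eqF // (lt_le_trans e_gt0).
lra.
Qed.

Section Rate.
Context {R : realType} {d : measure_display} {T : measurableType d}.
Context {P : probability T R} {X : nat -> {RV P >-> R}} {x0 alpha : R} {L : R -> R}.
Hypotheses (X_id : identically_distributed X) (alpha_gt0 : 0 < alpha).
Hypothesis L_sv : slowly_varying L.
Hypothesis S_reg : forall x, x0 < x -> survF (X 1%N) x = powR x (- alpha) * L x.

Lemma P_maxX_gt_quantile_rate (x e : R) : 1 <= x -> 0 < e ->
  exists N, forall n, (N <= n)%N -> 0 < geninv (distF (X 1%N)) (1 - n%:R^-1) ->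
  (P [set w | (geninv (distF (X 1%N)) (1 - n%:R^-1) * expR (ln x / alpha * ln (n%:R : R)) <
               maxX (fun i => X i : T -> R) n w)%R]
     <= (expR ((- ln x + e) * ln (n%:R : R)))%:E)%E.
Proof.
move=> x_ge1 e_gt0; have [lnx_lt|lnx_ge] := ltP (ln x) e.
  exists 1%N => n n_gt0 _; apply: (@le_trans _ _ 1%E).
    exact/probability_le1/measurable_maxX_gt.
  rewrite lee_fin -[X in X <= _]expR0 ler_expR; apply: mulr_ge0; first by lra.
  by apply: ln_ge0; rewrite ler1n.
have lnx_gt0 : 0 < ln x := lt_le_trans e_gt0 lnx_ge.
(* [beta / alpha * ln x = ln x - e / 2]: half of the slack [e] is spent here *)
pose beta := alpha * (1 - e / (2 * ln x)).
have beta_lt : beta < alpha by rewrite /beta gtr_pMr // gtrBl divr_gt0 ?mulr_gt0.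
have beta_ge0 : 0 <= beta.
  by apply: mulr_ge0 (ltW alpha_gt0) _; rewrite subr_ge0 ler_pdivrMr ?mulr_gt0 //; lra.
have [A [A_gt0 x0_lt] S_doubling] := regular_variation_doubling beta_lt L_sv S_reg.
have SA_gt0 : 0 < survF (X 1%N) A.
  by rewrite S_reg // mulr_gt0 ?powR_gt0 //; case: L_sv => L_gt0 _; exact: L_gt0.
have [N2 ln_ge2] := ln_nat_ge_eventually _ (ln 2 / (ln x / alpha)).
have [N3 ln_ge3] := ln_nat_ge_eventually _ (4 * beta * ln 2 / e).
exists (maxn (Num.truncn (survF (X 1%N) A)^-1).+1 (maxn N2 N3)) => n.
rewrite !geq_max => /and3P[n_ge /ln_ge2 lnn_ge2 /ln_ge3 lnn_ge3] q_gt0.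
have n_gt : (survF (X 1%N) A)^-1 < n%:R.
  by apply: (lt_le_trans (truncnS_gt _)); rewrite ler_nat.
have c_ge : ln 2 <= ln x / alpha * ln (n%:R : R) by rewrite mulrC -ler_pdivrMr ?divr_gt0.
have := P_maxX_gt_quantile_le X_id A_gt0 beta_ge0 S_doubling SA_gt0 n _ n_gt q_gt0 c_ge.
move=> /le_trans; apply; rewrite lee_fin ler_expR; exact: tail_exponent_le.
Qed.

End Rate.

Theorem mainTheorem3 (R : realType) (d : measure_display) (T : measurableType d)
  (P : probability T R) (X : nat -> {RV P >-> R})
  (x0 alpha : R) (L : R -> R) :
  mutually_independent X -> identically_distributed X ->
  0 < x0 -> 0 < alpha -> slowly_varying L ->
  (forall x, x0 < x -> survF (X 1%N) x = powR x (- alpha) * L x) ->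
  let a := fun n : nat => geninv (distF (X 1%N)) (1 - n%:R^-1) in
  let Zevent := fun (n : nat) (x : R) =>
    [set w | 0 < maxX (fun i => X i : T -> R) n w /\
             x < powR (maxX (fun i => X i : T -> R) n w / a n) (alpha / ln (n%:R : R))] in
  forall x : R, 1 <= x ->
    (limn_esup (fun n : nat =>
       if (2 <= n)%N then (lne (P (Zevent n x)) * ((ln (n%:R : R))^-1)%:E)%E
       else 0%E) <= (- ln x)%:E)%E.
Proof.
move=> _ X_id _ alpha_gt0 L_sv S_reg a Zevent x x_ge1.
apply: limn_esup_le_eventually => e e_gt0.
have [N P_le] := P_maxX_gt_quantile_rate X_id alpha_gt0 L_sv S_reg x e x_ge1 e_gt0.
exists (maxn 2 N) => n; rewrite geq_max => /andP[n2 /P_le {}P_le]; rewrite n2.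
have lnn_gt0 : 0 < ln (n%:R : R) by rewrite ln_gt0 // ltr1n.
apply: (@le_trans _ _ ((- ln x + e) * ln (n%:R : R) * (ln (n%:R : R))^-1)%:E).
  apply: lne_mul_le; rewrite ?measure_ge0 ?invr_gt0 //.
  rewrite /Zevent powR_div_event_eq //; case: ifPn => [/P_le //|_].
  by rewrite measure0 lee_fin expR_ge0.
by rewrite mulrK ?unitfE ?gt_eqF.
Qed.
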